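(* There exists a countable subset $B\subseteq\mathbf{M}$ such that: (1) $\mathrm{gcl}(B)=\mathbf{M}$; (2) $B_0\leqslant\mathbf{M}$ for every finite $B_0\subseteq B$; (3) every permutation of $B$ extends to an automorphism of $\mathbf{M}$.
   Context: Fix $\mathfrak{m}\ge2$. Graphs, $\delta(A)=\mathfrak{m}|A|-|\mathcal{R}(A)|$ ($\mathcal{R}(A)$ the edge set), $A\leqslant B$ iff $\delta(A')\ge\delta(A)$ for all $A\subseteq A'\subseteq B$ (for infinite $N$: $A\leqslant B$ for all finite $B\subseteq N$ containing $A$). $\mathsf{K_0}$ = finite graphs all of whose subgraphs have $\delta\ge0$. $\mathbf{M}$ is the $(\mathsf{K_0},\leqslant)$-generic: unique countable graph that is a union of a chain of finite $\leqslant$-closed subsets, in which isomorphisms between finite $\leqslant$-closed subsets extend to automorphisms, and into which every member of $\mathsf{K_0}$ embeds $\leqslant$-closedly. $\mathrm{cl}(A)$ is the smallest finite $\leqslant$-closed subset of $\mathbf{M}$ containing finite $A$; $\mathrm{d}(A)=\delta(\mathrm{cl}(A))$; $\mathrm{d}(m/A)=\mathrm{d}(\{m\}\cup A)-\mathrm{d}(A)$; for any $X\subseteq\mathbf{M}$, $\mathrm{gcl}(X)=\{m\in\mathbf{M}:\mathrm{d}(m/A)=0$ for some finite $A\subseteq X\}$. *)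

(* Hrushovski's (K_0, <=)-generic graph for delta = m|A| - |R(A)|. *)
From mathcomp Require Import all_boot all_order all_algebra.
Set Implicit Arguments. Unset Strict Implicit. Unset Printing Implicit Defensive.
Import Order.TTheory GRing.Theory Num.Theory.
Local Open Scope ring_scope.

(* Number of edges of the subgraph induced on the (duplicate-free) list s,
   for a symmetric irreflexive relation E: unordered pairs {x,y} with E x y. *)
Fixpoint nedges (T : eqType) (E : rel T) (s : seq T) : nat :=
  match s with
  | [::] => 0%N
  | x :: t => (count (E x) t + nedges E t)%N
  end.

Definition delta (m : nat) (T : eqType) (E : rel T) (A : seq T) : int :=
  (m * size (undup A))%:Z - (nedges E (undup A))%:Z.

Definition sym_irrefl (T : eqType) (E : rel T) : Prop :=
  (forall x y, E x y = E y x) /\ (forall x, E x x = false).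

Definition leqs (m : nat) (T : eqType) (E : rel T) (A B : seq T) : Prop :=
  {subset A <= B} /\
  forall A' : seq T, {subset A <= A'} -> {subset A' <= B} ->
    delta m E A <= delta m E A'.

Definition closedM (m : nat) (T : eqType) (E : rel T) (A : seq T) : Prop :=
  forall B : seq T, {subset A <= B} -> leqs m E A B.

Definition inK0 (m : nat) (T : eqType) (E : rel T) (A : seq T) : Prop :=
  forall A' : seq T, {subset A' <= A} -> 0 <= delta m E A'.

Definition K0graph (m n : nat) (E : rel 'I_n) : Prop :=
  sym_irrefl E /\ forall A : seq 'I_n, 0 <= delta m E A.

Definition partial_iso (T : eqType) (E : rel T) (A A' : seq T) (g : T -> T) : Prop :=
  {in A &, injective g} /\
  (forall y, y \in A' <-> exists2 x, x \in A & g x = y) /\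
  {in A &, forall x y, E x y = E (g x) (g y)}.

Definition automorphism (T : eqType) (E : rel T) (s : T -> T) : Prop :=
  bijective s /\ forall x y, E x y = E (s x) (s y).

Definition is_generic (m : nat) (V : countType) (E : rel V) : Prop :=
  sym_irrefl E /\
  (exists ch : nat -> seq V,
      (forall n, {subset ch n <= ch n.+1}) /\
      (forall n, closedM m E (ch n) /\ inK0 m E (ch n)) /\
      (forall v, exists n, v \in ch n)) /\
  (forall (A A' : seq V) (g : V -> V),
      closedM m E A -> closedM m E A' -> partial_iso E A A' g ->
      exists2 s, automorphism E s & {in A, forall x, s x = g x}) /\
  (forall (n : nat) (En : rel 'I_n), K0graph m En ->
      exists h : 'I_n -> V,
        injective h /\ (forall i j, En i j = E (h i) (h j)) /\
        closedM m E (map h (enum 'I_n))).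

Definition is_cl (m : nat) (V : eqType) (E : rel V) (A C : seq V) : Prop :=
  {subset A <= C} /\ closedM m E C /\
  forall C' : seq V, {subset A <= C'} -> closedM m E C' -> {subset C <= C'}.

Definition dim_is (m : nat) (V : eqType) (E : rel V) (A : seq V) (k : int) : Prop :=
  exists2 C, is_cl m E A C & delta m E C = k.

Definition in_gcl (m : nat) (V : eqType) (E : rel V) (X : V -> Prop) (v : V) : Prop :=
  exists A : seq V, (forall x, x \in A -> X x) /\
    exists k k', [/\ dim_is m E A k, dim_is m E (v :: A) k' & k' - k = 0].

From mathcomp Require Import all_boot all_order all_algebra.
From mathcomp Require Import finmap zify.
From Stdlib Require Import ClassicalEpsilon Classical.
Set Implicit Arguments. Unset Strict Implicit. Unset Printing Implicit Defensive.
Import Order.TTheory GRing.Theory Num.Theory.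
Local Open Scope fset_scope.

(* Build B as an increasing union of finite sets B_n, each <=-closed in M and
   edgeless.  To absorb the n-th vertex v, adjoin repeatedly a new vertex b joined
   only to v and lying freely over cl(v B) (it exists by universality and
   homogeneity); b keeps the set closed and edgeless and lowers d(v/B) by one.
   Every finite B_0 <= B then has d(B_0) = m|B_0|, so any finite set lies in a
   closed C with delta(C) <= m|B_0| for a finite B_0 <= B; such a C meets B exactly
   in B_0, has no edges to the rest of B, and stays closed when points of B are
   added.  These facts let a back-and-forth between closed finite sets extend any
   permutation of B to an automorphism. *)

Section Predimension.
Variables (T : choiceType) (E : rel T) (m : nat).

Definition arcs (A : {fset T}) : nat := \sum_(x <- A) \sum_(y <- A) E x y.
Definition deg (A : {fset T}) x : nat := \sum_(y <- A) E x y.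

(* Twice the predimension: counting ordered pairs avoids halving. *)
Definition delta2 (A : {fset T}) : int := ((2 * m * #|`A|)%N%:Z - (arcs A)%:Z)%R.

Lemma arcs_restrict A W : A `<=` W ->
  arcs A = \sum_(x <- W) \sum_(y <- W) [&& x \in A, y \in A & E x y].
Proof.
move=> sAW; rewrite /arcs.
transitivity (\sum_(x <- A) \sum_(y <- W) [&& x \in A, y \in A & E x y]).
  apply: eq_fbigr => x xA _; symmetry; rewrite -(big_fset_incl _ sAW); last first.
    by move=> y _ yA; rewrite (negbTE yA) andbF.
  by apply: eq_fbigr => y yA _; rewrite xA yA.
apply: big_fset_incl => // x _ xA; apply: big1 => y _; by rewrite (negbTE xA).
Qed.

Lemma arcsS A B : A `<=` B -> (arcs A <= arcs B)%N.
Proof.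
move=> sAB; rewrite (arcs_restrict sAB) (arcs_restrict (fsubset_refl B)).
apply: leq_sum => x _; apply: leq_sum => y _.
case xA: (x \in A); case yA: (y \in A); rewrite ?andbF //=.
by rewrite (fsubsetP sAB _ xA) (fsubsetP sAB _ yA).
Qed.

Lemma arcs_supermod A B : (arcs A + arcs B <= arcs (A `|` B) + arcs (A `&` B))%N.
Proof.
have sA : A `<=` A `|` B by apply: fsubsetUl.
have sB : B `<=` A `|` B by apply: fsubsetUr.
have sI : A `&` B `<=` A `|` B by apply: fsubset_trans (fsubsetIl _ _) sA.
rewrite (arcs_restrict sA) (arcs_restrict sB) (arcs_restrict sI).
rewrite (arcs_restrict (fsubset_refl _)) -!big_split /=.
apply: leq_sum => x _; rewrite -!big_split /=; apply: leq_sum => y _; rewrite !inE.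
by case: (x \in A); case: (x \in B); case: (y \in A); case: (y \in B); case: (E x y).
Qed.

Lemma delta2_submod A B : (delta2 (A `|` B) + delta2 (A `&` B) <= delta2 A + delta2 B)%R.
Proof. have := arcs_supermod A B; have := cardfsUI A B; rewrite /delta2; lia. Qed.

Lemma sum_count (P : pred T) s : \sum_(x <- s) (P x : nat) = count P s.
Proof. by elim: s => [|y s IH]; rewrite ?big_nil ?big_cons //= IH. Qed.

Lemma deg_count A x : deg A x = count (E x) A.
Proof. exact: sum_count. Qed.

Lemma deg_pendant (A : {fset T}) b u : {in A, forall y, E b y = (y == u)} ->
  deg A b = (u \in A).
Proof.
move=> h; rewrite deg_count (@eq_in_count _ _ (pred1 u)); last by move=> y /h.
by rewrite count_uniq_mem // fset_uniq.
Qed.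

Lemma arcs_eq0 A x y : arcs A = 0%N -> x \in A -> y \in A -> E x y = false.
Proof.
move=> h xA yA; apply/negP => Exy; have : (0 < arcs A)%N; last by rewrite h.
by rewrite /arcs (big_fsetD1 x) //= (big_fsetD1 y) //= Exy; lia.
Qed.

Hypothesis Esym : forall x y, E x y = E y x.
Hypothesis Eirr : forall x, E x x = false.

Lemma arcsU1 A x : x \notin A -> arcs (x |` A) = (arcs A + 2 * deg A x)%N.
Proof.
move=> xA; rewrite /arcs big_fsetU1 // big_fsetU1 // Eirr /=.
have -> : \sum_(i <- A) \sum_(y <- x |` A) E i y =
          \sum_(i <- A) (E i x + \sum_(y <- A) E i y)%N.
  by apply: eq_bigr => i _; rewrite big_fsetU1.
rewrite big_split /= /deg.
under [\sum_(i <- A) E i x]eq_bigr => y _ do rewrite Esym.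
lia.
Qed.

Lemma delta2U1 A x : x \notin A ->
  delta2 (x |` A) = (delta2 A + (2 * m)%N%:Z - (2 * deg A x)%N%:Z)%R.
Proof. by move=> xA; rewrite /delta2 arcsU1 // cardfsU1 xA /=; lia. Qed.

Lemma arcs_seq (s : seq T) :
  \sum_(x <- s) \sum_(y <- s) (E x y : nat) = (2 * nedges E s)%N.
Proof.
elim: s => [|x s IH]; first by rewrite big_nil.
rewrite big_cons /= big_cons Eirr /=.
have -> : \sum_(j <- s) \sum_(y <- x :: s) (E j y : nat) =
          \sum_(j <- s) (E j x + \sum_(y <- s) E j y)%N.
  by apply: eq_bigr => j _; rewrite big_cons.
rewrite big_split /= IH sum_count.
under eq_bigr => y _ do rewrite Esym.
rewrite sum_count; lia.
Qed.

Lemma delta2_even A : delta2 A = (((m * #|` A|)%N%:Z - (nedges E A)%:Z) * 2)%R.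
Proof. by rewrite /delta2 /arcs arcs_seq; lia. Qed.

Definition fs (s : seq T) : {fset T} := [fset x | x in s].

Lemma in_fs s x : (x \in fs s) = (x \in s).
Proof. by rewrite /fs inE. Qed.

Lemma delta_delta2 s : (delta m E s * 2 = delta2 (fs s))%R.
Proof.
have ps : perm_eq (undup s) (fs s).
  apply: uniq_perm; [exact: undup_uniq | exact: fset_uniq |].
  by move=> x; rewrite mem_undup in_fs.
rewrite /delta /delta2 -(perm_size ps).
have -> : arcs (fs s) = (2 * nedges E (undup s))%N.
  rewrite -arcs_seq /arcs -(perm_big _ ps) /=.
  by apply: eq_bigr => x _; rewrite -(perm_big _ ps).
lia.
Qed.

End Predimension.

Lemma delta2_im (T T' : choiceType) (E : rel T) (E' : rel T') m (f : T -> T') A :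
  {in A &, injective f} -> {in A &, forall x y, E' (f x) (f y) = E x y} ->
  delta2 E m A = delta2 E' m (f @` A).
Proof.
move=> finj fE; rewrite /delta2 /arcs card_in_imfset //= big_imfset //=.
congr (_ - (Posz _))%R; apply: eq_fbigr => x xA _; rewrite big_imfset //=.
by apply: eq_fbigr => y yA _; rewrite fE.
Qed.

Lemma ex_min_nat (P : nat -> Prop) : (exists n, P n) ->
  exists n, P n /\ forall k, P k -> (n <= k)%N.
Proof.
move=> [n Pn]; apply: NNPP => H.
suff : forall j k, (k <= j)%N -> ~ P k by move/(_ n n (leqnn n)).
elim=> [|j IH] k.
  by rewrite leqn0 => /eqP -> P0; apply: H; exists 0%N; split.
move=> hk Pk; apply: H; exists k; split => // k' Pk'.
by rewrite leqNgt; apply/negP => lt; apply: (IH k') => //; lia.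
Qed.

Section Generic.
Variables (m : nat) (V : countType) (E : rel V).
Hypotheses (hm : (2 <= m)%N) (hM : is_generic m E).

Local Notation d2 := (delta2 E m).

Lemma Esym x y : E x y = E y x.
Proof. by case: hM => [[]]. Qed.

Lemma Eirr x : E x x = false.
Proof. by case: hM => [[]]. Qed.

Definition closed (A : {fset V}) := forall X, A `<=` X -> (d2 A <= d2 X)%R.

Lemma fs_fset (A : {fset V}) : fs A = A.
Proof. by apply/fsetP => x; rewrite in_fs. Qed.

Lemma sub_fs (s s' : seq V) : {subset s <= s'} <-> fs s `<=` fs s'.
Proof.
split=> [h|/fsubsetP h x xs]; first by apply/fsubsetP => x; rewrite !in_fs; apply: h.
by rewrite -in_fs; apply: h; rewrite in_fs.
Qed.

Lemma delta_le s s' :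
  (delta m E s <= delta m E s')%R <-> (d2 (fs s) <= d2 (fs s'))%R.
Proof. by rewrite -!(delta_delta2 m Esym Eirr) ler_pM2r. Qed.

Lemma closedM_closed s : closedM m E s <-> closed (fs s).
Proof.
split=> [h X sX|h B sB].
  have sX' : {subset s <= X} by move=> x xs; apply: (fsubsetP sX); rewrite in_fs.
  have [_ H] := h X sX'.
  by rewrite -[X in (_ <= d2 X)%R]fs_fset; apply/delta_le; exact: H.
by split=> // A' sA' _; apply/delta_le; apply: h; exact/sub_fs.
Qed.

Lemma chain_mono (ch : nat -> seq V) : (forall n, {subset ch n <= ch n.+1}) ->
  forall n k, (n <= k)%N -> {subset ch n <= ch k}.
Proof.
move=> h n; elim=> [|k IH]; first by rewrite leqn0 => /eqP ->.
by rewrite leq_eqVlt => /orP [/eqP -> //| hk] x xn; apply: h; apply: IH.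
Qed.

Lemma delta2_ge0 (A : {fset V}) : (0 <= d2 A)%R.
Proof.
case: hM => _ [[ch [hmono [hcl hall]]] _].
have [n hn] : exists n, {subset A <= ch n}.
  elim/fset1U_rect: A => [|x X _ [n hn]]; first by exists 0%N.
  have [k hk] := hall x.
  exists (maxn n k) => y /fset1UP [->|yX].
    exact: (chain_mono hmono (leq_maxr n k)).
  by apply: (chain_mono hmono (leq_maxl n k)); apply: hn.
have [_ hK] := hcl n.
rewrite -[A in d2 A]fs_fset -(delta_delta2 m Esym Eirr).
by apply: mulr_ge0 => //; exact: hK.
Qed.

Definition dim_spec (A : {fset V}) (k : int) :=
  (forall X, A `<=` X -> (k <= d2 X)%R) /\ exists2 X, A `<=` X & d2 X = k.

Lemma dim_ex A : exists k, dim_spec A k.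
Proof.
have h0 : exists n, exists2 X, A `<=` X & d2 X = Posz n.
  by exists `|d2 A|%N, A => //; have := delta2_ge0 A; lia.
have [n [[X sX hX] hmin]] := ex_min_nat h0.
exists (Posz n); split; last by exists X.
move=> Y sY; have Y0 := delta2_ge0 Y.
have : (n <= `|d2 Y|)%N by apply: hmin; exists Y => //; lia.
lia.
Qed.

(* [dim] is twice the paper's d. *)
Definition dim A : int := proj1_sig (constructive_indefinite_description _ (dim_ex A)).

Lemma dimP A : dim_spec A (dim A).
Proof. exact: proj2_sig (constructive_indefinite_description _ (dim_ex A)). Qed.

Lemma dim_le A X : A `<=` X -> (dim A <= d2 X)%R.
Proof. by case: (dimP A) => h _; apply: h. Qed.

Lemma dimS A B : A `<=` B -> (dim A <= dim B)%R.
Proof.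
move=> sAB; case: (dimP B) => _ [X sX <-].
by apply: dim_le; exact: fsubset_trans sAB sX.
Qed.

Lemma closed_dimE A : closed A <-> dim A = d2 A.
Proof.
split=> [h|h X sX]; last by rewrite -h; apply: dim_le.
case: (dimP A) => h1 [X sX hX].
by have := h1 A (fsubset_refl _); have := h X sX; lia.
Qed.

Lemma delta2I_closed C X : closed C -> (d2 (X `&` C) <= d2 X)%R.
Proof.
move=> hC; have := delta2_submod E m X C; have := hC (X `|` C) (fsubsetUr _ _); lia.
Qed.

Lemma dim_submod A B : (dim (A `|` B) + dim (A `&` B) <= dim A + dim B)%R.
Proof.
case: (dimP A) => _ [XA sA <-]; case: (dimP B) => _ [XB sB <-].
have := delta2_submod E m XA XB.
by have := dim_le (fsetUSS sA sB); have := dim_le (fsetISS sA sB); lia.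
Qed.

(* A minimiser of [d2] over supersets of [A] of least size is the closure. *)
Lemma closure_ex A : exists C, [/\ A `<=` C, closed C, d2 C = dim A &
  forall C', A `<=` C' -> closed C' -> C `<=` C'].
Proof.
have h0 : exists n, exists X, [/\ A `<=` X, d2 X = dim A & #|` X| = n].
  by case: (dimP A) => _ [X sX hX]; exists #|` X|, X.
have [n [[X [sX hX cX]] hmin]] := ex_min_nat h0.
exists X; split => //.
  by move=> Y sY; rewrite hX; apply: dim_le; exact: fsubset_trans sX sY.
move=> C' sC' hC'.
have sI : A `<=` X `&` C' by apply/fsubsetIP.
have e1 : d2 (X `&` C') = dim A.
  by have := delta2I_closed X hC'; have := dim_le sI; lia.
have := hmin #|` X `&` C'| (ex_intro _ _ (And3 sI e1 erefl)).
have := fsubset_leq_card (fsubsetIl X C'); rewrite cX => h1 h2.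
by apply/fsetIidPl/eqP; rewrite eqEfcard fsubsetIl cX.
Qed.

Lemma dim_absorbS x A A' : dim (x |` A) = dim A -> A `<=` A' -> dim (x |` A') = dim A'.
Proof.
move=> h sA; have := dim_submod (x |` A) A'.
rewrite -fsetUA (fsetUidPr _ _ sA).
have := dimS (fsubsetU1 x A').
have : (dim A <= dim ((x |` A) `&` A'))%R.
  by apply: dimS; apply/fsubsetIP; split => //; exact: fsubsetU1.
lia.
Qed.

Lemma dim_absorb_set S A : {in S, forall z, dim (z |` A) = dim A} -> dim (S `|` A) = dim A.
Proof.
elim/fset1U_rect: S => [|x S _ IH] h; first by rewrite fset0U.
rewrite -fsetUA (dim_absorbS (h x (fset1U1 x S)) (fsubsetUr S A)).
by apply: IH => z zS; apply: h; rewrite !inE zS orbT.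
Qed.

Definition cindep G := closed G /\ arcs E G = 0%N.

Lemma cindepS G B0 : cindep G -> B0 `<=` G -> cindep B0.
Proof.
move=> [hc he] sB; have e0 : arcs E B0 = 0%N by have := arcsS E sB; lia.
split=> // X sX; have := delta2I_closed X hc.
have eI : arcs E (X `&` G) = 0%N by have := arcsS E (fsubsetIr X G); lia.
have sI : B0 `<=` X `&` G by apply/fsubsetIP.
by have := fsubset_leq_card sI; rewrite /delta2 eI e0; nia.
Qed.

Lemma dim_cindep G : cindep G -> dim G = Posz (2 * m * #|` G|)%N.
Proof.
by move=> [hc he]; rewrite (proj1 (closed_dimE G) hc) /delta2 he subr0.
Qed.

Lemma aut_delta2 s A : automorphism E s -> d2 (s @` A) = d2 A.
Proof.
move=> [[si hs _] hE]; symmetry; apply: delta2_im => [x y _ _ /(congr1 si)|x y _ _].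
  by rewrite !hs.
by rewrite -hE.
Qed.

Lemma aut_inv s : automorphism E s ->
  exists si, [/\ cancel s si, cancel si s & automorphism E si].
Proof.
move=> [[si h1 h2] hE]; exists si; split => //; split; first by exists s.
by move=> x y; rewrite (hE (si x)) !h2.
Qed.

Lemma aut_closed s A : automorphism E s -> closed A -> closed (s @` A).
Proof.
move=> hs hA X sX; have [si [h1 h2 hsi]] := aut_inv hs.
have sA : A `<=` si @` X.
  apply/fsubsetP => a aA; rewrite -(h1 a); apply: in_imfset => /=.
  by apply: (fsubsetP sX); apply: in_imfset.
by rewrite aut_delta2 // -(aut_delta2 X hsi); exact: hA.
Qed.

Lemma closed_pendant D b : closed (b |` D) -> b \notin D -> (deg E D b <= 1)%N -> closed D.
Proof.
move=> hbD bD hdeg X sX; have := delta2I_closed X hbD.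
have d2D : (d2 D <= d2 (b |` D))%R by rewrite delta2U1 //; [lia | exact: Esym | exact: Eirr].
case: (boolP (b \in X)) => bX.
  suff -> : X `&` (b |` D) = b |` D by lia.
  by apply/fsetIidPr/fsubUsetP; rewrite fsub1set.
suff -> : X `&` (b |` D) = D by [].
apply/fsetP => y; rewrite !inE; have [->|_] := eqVneq y b; first by rewrite (negbTE bX) (negbTE bD).
by apply/andP/idP => [[]|yD] //; split=> //; exact: (fsubsetP sX).
Qed.

(* In [Ep], the vertex [top] is new and joined only to [v]; the others enumerate [C]. *)
Section Pendant.
Variables (C : {fset V}) (v : V).
Hypotheses (hC : closed C) (vC : v \in C).

Let n := size C.
Let top : 'I_n.+1 := ord_max.
Let enumC (i : 'I_n.+1) : V := nth v C i.
Let Ep (i j : 'I_n.+1) : bool :=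
  if i == top then (j != top) && (enumC j == v)
  else if j == top then enumC i == v else E (enumC i) (enumC j).

Let lt_top (i : 'I_n.+1) : i != top -> (i < n)%N.
Proof. by move=> h; have := ltn_ord i; rewrite -(inj_eq val_inj) /= in h; lia. Qed.

Let enumC_mem i : i != top -> enumC i \in C.
Proof. by move=> h; rewrite /enumC mem_nth // lt_top. Qed.

Let enumC_eq i j : i != top -> j != top -> (enumC i == enumC j) = (i == j).
Proof.
by move=> hi hj; rewrite /enumC nth_uniq ?lt_top ?fset_uniq.
Qed.

Let enumC_onto y : y \in C -> exists2 j, j != top & enumC j = y.
Proof.
move=> yC; have hi : (index y C < n)%N by rewrite index_mem.
have hi' : (index y C < n.+1)%N by apply: ltnW.
exists (Ordinal hi'); last by rewrite /enumC /= nth_index.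
by rewrite -(inj_eq val_inj) /=; apply/eqP => e; move: hi; rewrite e ltnn.
Qed.

Let Ep_sym i j : Ep i j = Ep j i.
Proof.
by rewrite /Ep; have [ei|hi] := eqVneq i top; have [ej|hj] := eqVneq j top; rewrite //= Esym.
Qed.

Let Ep_irr i : Ep i i = false.
Proof. by rewrite /Ep; have [ei|hi] := eqVneq i top; rewrite //= Eirr. Qed.

Let Ep_enumC i j : i != top -> j != top -> Ep i j = E (enumC i) (enumC j).
Proof. by move=> hi hj; rewrite /Ep (negbTE hi) (negbTE hj). Qed.

Let delta2_enumC (S : {fset 'I_n.+1}) : top \notin S -> delta2 Ep m S = d2 (enumC @` S).
Proof.
have nt i : i \in S -> top \notin S -> i != top by move=> iS; apply: contraNneq => <-.
move=> hS; apply: delta2_im => [i j iS jS /eqP|i j iS jS].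
  by rewrite enumC_eq ?nt // => /eqP.
by rewrite Ep_enumC ?nt.
Qed.

Let deg_top (S : {fset 'I_n.+1}) : top \notin S -> (deg Ep S top <= 1)%N.
Proof.
move=> hS; have [j0 hj0 fj0] := enumC_onto vC.
rewrite (@deg_pendant _ _ _ _ j0); first by case: (j0 \in S).
move=> j jS; have hj : j != top by apply: contraNneq hS => <-.
by rewrite /Ep eqxx hj /= -fj0 enumC_eq.
Qed.

Let pendant_K0 : K0graph m Ep.
Proof.
split=> [|A]; first by split; [exact: Ep_sym | exact: Ep_irr].
suff : (0 <= delta2 Ep m (fs A))%R by rewrite -(delta_delta2 m Ep_sym Ep_irr) pmulr_lge0.
set S := fs A; case: (boolP (top \in S)) => hS; last by rewrite delta2_enumC // delta2_ge0.
have tS : top \notin S `\ top by rewrite in_fsetD1 eqxx.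
rewrite -(fsetD1K hS) delta2U1 // delta2_enumC //.
by have := delta2_ge0 (enumC @` (S `\ top)); have := deg_top tS; lia.
Qed.

Let I := fs [seq i <- enum 'I_n.+1 | i != top].

Let mem_I i : (i \in I) = (i != top).
Proof. by rewrite in_fs mem_filter mem_enum andbT. Qed.

Let pendant_copy : exists h : 'I_n.+1 -> V,
  [/\ injective h, forall i j, Ep i j = E (h i) (h j), closed (h @` I) & closed (h top |` h @` I)].
Proof.
case: hM => _ [_ [_ huniv]].
have [h [hinj [hE hcl]]] := huniv n.+1 Ep pendant_K0.
have eD : fs (map h (enum 'I_n.+1)) = h top |` h @` I.
  apply/fsetP => y; rewrite in_fs; apply/mapP/fset1UP => [[i _ ->]|[->|/imfsetP [i _ ->]]].
  - by have [->|hi] := eqVneq i top; [left | right; rewrite mem_imfset // mem_I].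
  - by exists top; rewrite ?mem_enum.
  - by exists i; rewrite ?mem_enum.
have hD : closed (h top |` h @` I) by rewrite -eD; apply/closedM_closed.
exists h; split => //; apply: (closed_pendant hD); first by rewrite mem_imfset // mem_I eqxx.
have -> : deg E (h @` I) (h top) = deg Ep I top.
  by rewrite /deg big_imfset //=; [apply: eq_bigr => i _; rewrite hE | move=> ? ? _ _; exact: hinj].
by apply: deg_top; rewrite mem_I eqxx.
Qed.

Lemma pendant_ex : exists b, [/\ b \notin C, {in C, forall x, E b x = (x == v)} &
  closed (b |` C)].
Proof.
have [h [hinj hE hD' hD]] := pendant_copy.
have mD' y : y \in h @` I -> exists2 i, i != top & y = h i.
  by move=> /imfsetP [i]; rewrite mem_I => ? ->; exists i.
pose g y := if [pick i | (i != top) && (h i == y)] is Some i then enumC i else y.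
have gh i : i != top -> g (h i) = enumC i.
  move=> hi; rewrite /g; case: pickP => [i' /andP [_ /eqP /hinj -> //]|H].
  by have := H i; rewrite hi eqxx.
have piso : partial_iso E (h @` I) C g.
  split; [|split].
  - move=> x1 x2 /mD' [i1 h1 ->] /mD' [i2 h2 ->]; rewrite !gh // => /eqP.
    by rewrite enumC_eq // => /eqP ->.
  - move=> y; split => [yC|[x /mD' [i hi ->] <-]]; last by rewrite gh //; exact: enumC_mem.
    have [j hj <-] := enumC_onto yC.
    by exists (h j); [rewrite mem_imfset // mem_I | rewrite gh].
  - by move=> x1 x2 /mD' [i1 h1 ->] /mD' [i2 h2 ->]; rewrite !gh // -hE Ep_enumC.
have cD' : closedM m E (h @` I) by apply/closedM_closed; rewrite fs_fset.
have cC : closedM m E C by apply/closedM_closed; rewrite fs_fset.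
case: hM => _ [_ [hhom _]]; have [s hs sg] := hhom _ _ g cD' cC piso.
have sh i : i != top -> s (h i) = enumC i by move=> hi; rewrite sg ?gh // mem_imfset // mem_I.
have sinj : injective s by case: hs => /bij_inj.
exists (s (h top)); split.
- apply/negP => /enumC_onto [j hj]; rewrite -sh // => /sinj /hinj ej.
  by move: hj; rewrite ej eqxx.
- move=> x /enumC_onto [j hj <-]; rewrite -[X in E _ X](sh j hj) -hs.2 -hE.
  by rewrite /Ep eqxx hj.
suff <- : s @` (h @` I) = C by rewrite -imfsetU1; exact: aut_closed.
apply/fsetP => y; apply/imfsetP/idP => [[z /mD' [i hi ->] ->]|/enumC_onto [j hj <-]].
  by rewrite sh //; exact: enumC_mem.
by exists (h j); rewrite ?sh // mem_imfset // mem_I.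
Qed.

End Pendant.

Lemma dim_even A : exists z : int, dim A = (z * 2)%R.
Proof. by case: (dimP A) => _ [X _ <-]; rewrite (delta2_even m Esym Eirr X); eexists. Qed.

Lemma d2U1_pendant A b v : b \notin A -> {in A, forall x, E b x = (x == v)} ->
  d2 (b |` A) = (d2 A + (2 * m)%N%:Z - (2 * (v \in A))%N%:Z)%R.
Proof. by move=> bA hb; rewrite delta2U1 ?(deg_pendant hb) //; [exact: Esym | exact: Eirr]. Qed.

Lemma cindep_pendantU B0 C v b : cindep B0 -> B0 `<=` C -> v \notin B0 ->
  (dim B0 + 2 <= dim (v |` B0))%R ->
  b \notin C -> {in C, forall x, E b x = (x == v)} -> closed (b |` C) ->
  cindep (b |` B0).
Proof.
move=> [hB0 eB0] sB0C vB0 hv bC hb hbC.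
have bB0 : b \notin B0 by apply: contra bC; apply: (fsubsetP sB0C).
have hbB0 : {in B0, forall x, E b x = (x == v)} by move=> x /(fsubsetP sB0C) /hb.
split; last by rewrite arcsU1 ?eB0 ?(deg_pendant hbB0) ?(negbTE vB0) //; [exact: Esym | exact: Eirr].
move=> X sX; have := delta2I_closed X hbC.
have bX : b \in X by apply: (fsubsetP sX); exact: fset1U1.
have -> : X `&` (b |` C) = b |` (X `&` C).
  by apply/fsetP => y; rewrite !inE; case: (y =P b) => [->|]; rewrite ?bX ?andbT ?orbF.
have hbXC : {in X `&` C, forall x, E b x = (x == v)} by move=> x /fsetIP [_ /hb].
rewrite (d2U1_pendant bB0 hbB0) (negbTE vB0) (d2U1_pendant _ hbXC); last first.
  by rewrite inE negb_and bC orbT.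
have sB0X : B0 `<=` X `&` C.
  by apply/fsubsetIP; split => //; apply: fsubset_trans sX; exact: fsubsetU1.
have := hB0 _ sB0X; rewrite -(proj1 (closed_dimE _) hB0).
case: (boolP (v \in X `&` C)) => vXC; last by lia.
have : (dim (v |` B0) <= d2 (X `&` C))%R.
  by apply: dim_le; apply/fsubUsetP; split => //; rewrite fsub1set.
lia.
Qed.

Lemma pendant_step B0 v : cindep B0 -> (dim B0 < dim (v |` B0))%R ->
  exists b, [/\ b \notin B0, cindep (b |` B0) &
    (dim (v |` (b |` B0)) - dim (b |` B0) <= dim (v |` B0) - dim B0 - 2)%R].
Proof.
move=> hB0 hpos.
have vB0 : v \notin B0.
  by apply: contraTN hpos => vB; rewrite (fsetUidPr _ _ _ : [fset v] `|` B0 = B0) ?fsub1set ?ltxx.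
have [C [sC hC dC _]] := closure_ex (v |` B0).
have vC : v \in C by apply: (fsubsetP sC); exact: fset1U1.
have sB0C : B0 `<=` C by apply: fsubset_trans sC; exact: fsubsetU1.
have [b [bC hb hbC]] := pendant_ex hC vC.
have ev : (dim B0 + 2 <= dim (v |` B0))%R.
  by have [z hz] := dim_even (v |` B0); have [z' hz'] := dim_even B0; move: hpos; rewrite hz hz'; lia.
have bB0 : b \notin B0 by apply: contra bC; apply: (fsubsetP sB0C).
have hbB0 : {in B0, forall x, E b x = (x == v)} by move=> x /(fsubsetP sB0C) /hb.
have ibB0 := cindep_pendantU hB0 sB0C vB0 ev bC hb hbC.
exists b; split => //.
have : (dim (v |` (b |` B0)) <= d2 (b |` C))%R.
  apply: dim_le; apply/fsubsetP => y; rewrite !inE => /or3P [/eqP ->|/eqP ->|yB].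
  - by rewrite vC orbT.
  - by rewrite eqxx.
  - by rewrite (fsubsetP sB0C _ yB) orbT.
rewrite (d2U1_pendant bC hb) vC (proj1 (closed_dimE _) ibB0.1) -dC.
rewrite (d2U1_pendant bB0 hbB0) (negbTE vB0) -(proj1 (closed_dimE _) hB0.1); lia.
Qed.

(* Each pendant step lowers [dim (v |` B) - dim B] by at least 2, so finitely many absorb [v]. *)
Lemma absorb_ex B0 v : cindep B0 ->
  exists B1, [/\ B0 `<=` B1, cindep B1 & dim (v |` B1) = dim B1].
Proof.
move=> hB0; have h0 := dimS (fsubsetUr [fset v] B0).
suff : forall k B0, cindep B0 -> (dim (v |` B0) - dim B0 <= Posz k)%R ->
  exists B1, [/\ B0 `<=` B1, cindep B1 & dim (v |` B1) = dim B1].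
  by move=> H; apply: (H `|dim (v |` B0) - dim B0|%N B0 hB0); lia.
elim=> [|k IH] {hB0 h0}B0 hB0 hk; have := dimS (fsubsetUr [fset v] B0).
  by exists B0; split => //; lia.
case: (ltP (dim B0) (dim (v |` B0))) => hp hm0; last by exists B0; split => //; lia.
have [b [_ hb hdec]] := pendant_step hB0 hp.
have [B1 [s1 g1 e1]] := IH (b |` B0) hb ltac:(lia).
by exists B1; split => //; apply: fsubset_trans s1; exact: fsubsetU1.
Qed.

Definition within (P : V -> Prop) (A : {fset V}) := forall z, z \in A -> P z.

Lemma cardfsU_sub (B0 Z B1 : {fset V}) : B0 `<=` Z ->
  (#|` Z `|` B1| + #|` B0| <= #|` B0 `|` B1| + #|` Z|)%N.
Proof.
move=> sBZ; have := fsubset_leq_card (fsetSI B1 sBZ).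
by have := cardfsUI Z B1; have := cardfsUI B0 B1; lia.
Qed.

Section Base.
Variable base : V -> Prop.
Hypothesis base_cindep : forall B0, within base B0 -> cindep B0.

Lemma withinU1 P z A : P z -> within P A -> within P (z |` A).
Proof. by move=> Pz PA y /fset1UP [->|/PA]. Qed.

Lemma withinU P A A' : within P A -> within P A' -> within P (A `|` A').
Proof. by move=> PA PA' y /fsetUP [/PA|/PA']. Qed.

Lemma base_noE x y : base x -> base y -> E x y = false.
Proof.
move=> bx by_; have [_ he] : cindep [fset x; y].
  by apply: base_cindep => z; rewrite !inE => /orP [/eqP ->|/eqP ->].
by apply: (arcs_eq0 he); rewrite !inE eqxx ?orbT.
Qed.

(* As [dim B0 = 2m|B0|] for finite parts of the base, the bound on [d2 Z] says that
   [Z] adds no dimension over [B0]. *)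
Section SmallHull.
Variables (Z B0 : {fset V}).
Hypotheses (sBZ : B0 `<=` Z) (hB0 : within base B0)
  (hZ : (d2 Z <= Posz (2 * m * #|` B0|)%N)%R).

Lemma hull_base z : z \in Z -> base z -> z \in B0.
Proof.
move=> zZ bz; apply: contraTT isT => zB.
have := dim_cindep (base_cindep (withinU1 bz hB0)); rewrite cardfsU1 zB /=.
have := dimS (_ : z |` B0 `<=` Z); have := dim_le (fsubset_refl Z).
have : z |` B0 `<=` Z by apply/fsubUsetP; rewrite fsub1set.
by move=> h h1 /(_ h) h2 h3; move: hZ h1 h2 h3; set k := #|` B0|; nia.
Qed.

Lemma hull_base_noE x z : x \in Z -> base z -> z \notin Z -> E x z = false.
Proof.
move=> xZ bz zZ.
have zB : z \notin B0 by apply: contra zZ; apply: (fsubsetP sBZ).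
have := dim_cindep (base_cindep (withinU1 bz hB0)); rewrite cardfsU1 zB /=.
have := dimS (fsetUS [fset z] sBZ); have := dim_le (fsubset_refl (z |` Z)).
rewrite delta2U1 //; [|exact: Esym | exact: Eirr] => h1 h2 h3.
have : deg E Z z = 0%N by move: hZ h1 h2 h3; set k := #|` B0|; nia.
rewrite Esym /deg (big_fsetD1 x) //=; lia.
Qed.

Lemma hull_closedU B1 : within base B1 -> closed (Z `|` B1).
Proof.
move=> hB1 X sX; have := dim_le sX.
have := dimS (fsetSU B1 sBZ).
rewrite (dim_cindep (base_cindep (withinU hB0 hB1))).
have := arcsS E (fsubsetUl Z B1); have := leq_mul (leqnn (2 * m)) (cardfsU_sub B1 sBZ).
by move: hZ; rewrite /delta2 !mulnDr; lia.
Qed.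

End SmallHull.

Hypothesis base_spans : forall z, exists A, within base A /\ dim (z |` A) = dim A.

Lemma base_spans_fset (S : {fset V}) : exists B0, within base B0 /\ {in S, forall z, dim (z |` B0) = dim B0}.
Proof.
elim/fset1U_rect: S => [|x S _ [B0 [hB0 hw]]]; first by exists fset0.
have [A [hA eA]] := base_spans x.
exists (A `|` B0); split; first exact: withinU.
move=> z /fset1UP [->|zS]; first exact: dim_absorbS eA (fsubsetUl _ _).
exact: dim_absorbS (hw z zS) (fsubsetUr _ _).
Qed.

Section Permutation.
Variables p q : V -> V.
Hypotheses (hp : forall x, base x -> base (p x)) (hq : forall x, base x -> base (q x))
  (qp : forall x, base x -> q (p x) = x) (pq : forall x, base x -> p (q x) = x).

(* The closedness fields are what allow homogeneity to extend [f] glued with [p]. *)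
Record bf_inv (X : {fset V}) (f : V -> V) (Y : {fset V}) (g : V -> V) : Prop := BFInv {
  bf_fK : forall x, x \in X -> f x \in Y /\ g (f x) = x;
  bf_gK : forall y, y \in Y -> g y \in X /\ f (g y) = y;
  bf_fp : forall x, x \in X -> base x -> f x = p x;
  bf_gq : forall y, y \in Y -> base y -> g y = q y;
  bf_fE : forall x z, x \in X -> z \in X -> E (f x) (f z) = E x z;
  bf_fpE : forall x z, x \in X -> base z -> E (f x) (p z) = E x z;
  bf_gqE : forall y z, y \in Y -> base z -> E (g y) (q z) = E y z;
  bf_closedX : forall B1, within base B1 -> closed (X `|` B1);
  bf_closedY : forall B1, within base B1 -> closed (Y `|` B1) }.

Lemma p_inj B0 : within base B0 -> {in B0 &, injective p}.
Proof. by move=> hB0 a b aB bB e; rewrite -(qp (hB0 a aB)) e qp //; apply: hB0. Qed.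

Lemma within_imp B0 : within base B0 -> within base (p @` B0).
Proof. by move=> hB0 y /imfsetP [b bB ->]; apply/hp/hB0. Qed.

Definition glue (X : {fset V}) (f : V -> V) z := if z \in X then f z else p z.

Section Glue.
Variables (X Y B0 : {fset V}) (f g : V -> V).
Hypotheses (bf : bf_inv X f Y g) (hB0 : within base B0).

Let gluep z : z \in B0 -> glue X f z = p z.
Proof. by move=> zB; rewrite /glue; case: ifP => // zX; apply: (bf_fp bf) => //; apply: hB0. Qed.

Variant glue_spec z : V -> Prop :=
  | GlueX of z \in X : glue_spec z (f z)
  | GlueB of z \notin X & z \in B0 : glue_spec z (p z).

Let glueP z : z \in X `|` B0 -> glue_spec z (glue X f z).
Proof.
rewrite /glue => /fsetUP zXB; case: ifPn => zX; first exact: GlueX.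
by apply: GlueB => //; case: zXB; rewrite ?(negbTE zX).
Qed.

Let glue_inj_mixed x z : x \in X -> z \in B0 -> f x = p z -> x = z.
Proof.
move=> xX zB e; have bz : base z by apply: hB0.
have pY : p z \in Y by rewrite -e; exact: (bf_fK bf xX).1.
by rewrite -(bf_fK bf xX).2 e (bf_gq bf) ?qp //; apply: hp.
Qed.

Let glue_E_mixed x z : x \in X -> z \in B0 -> E (f x) (p z) = E x z.
Proof. by move=> xX zB; apply: (bf_fpE bf) => //; apply: hB0. Qed.

Lemma glue_partial_iso : partial_iso E (X `|` B0) (Y `|` p @` B0) (glue X f).
Proof.
split; [|split].
- move=> z1 z2 h1 h2; case: (glueP h1) => [z1X|_ z1B]; case: (glueP h2) => [z2X|_ z2B].
  + by move=> e; rewrite -(bf_fK bf z1X).2 e (bf_fK bf z2X).2.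
  + exact: glue_inj_mixed.
  + by move=> e; symmetry; apply: glue_inj_mixed.
  + exact: (p_inj hB0).
- move=> y; split.
    move=> /fsetUP [yY|/imfsetP [b bB ->]].
      have [gX fgy] := bf_gK bf yY; exists (g y); first by rewrite inE gX.
      by rewrite /glue gX.
    by exists b; [rewrite inE bB orbT | apply: gluep].
  move=> [z zXB <-]; case: (glueP zXB) => [zX|_ zB].
    by rewrite inE (bf_fK bf zX).1.
  by rewrite inE in_imfset ?orbT.
- move=> z1 z2 h1 h2; case: (glueP h1) => [z1X|_ z1B]; case: (glueP h2) => [z2X|_ z2B].
  + by rewrite (bf_fE bf).
  + by rewrite glue_E_mixed.
  + by rewrite [E (p z1) _]Esym glue_E_mixed // Esym.
  + have bz1 : base z1 by apply: hB0.
    have bz2 : base z2 by apply: hB0.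
    by rewrite !base_noE ?hp //; apply: hp.
Qed.

End Glue.

Lemma aut_hull_bf B0 C s si : within base B0 -> B0 `<=` C ->
  (d2 C <= Posz (2 * m * #|` B0|)%N)%R ->
  automorphism E s -> cancel s si -> cancel si s -> {in B0, s =1 p} ->
  bf_inv C s (s @` C) si.
Proof.
move=> hB0 sB0C hZ hs c1 c2 sB.
have sE x y : E (s x) (s y) = E x y by rewrite -hs.2.
have siE x y : E (si x) (si y) = E x y by rewrite -sE !c2.
have hpB0 := within_imp hB0.
have hZ' : (d2 (s @` C) <= Posz (2 * m * #|` p @` B0|)%N)%R.
  by rewrite aut_delta2 // card_in_imfset //; exact: p_inj.
have spB0 : p @` B0 `<=` s @` C.
  apply/fsubsetP => y /imfsetP [b bB ->]; rewrite -(sB b bB); apply: in_imfset.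
  exact: (fsubsetP sB0C).
have msC x : x \in C -> s x \in s @` C by move=> xC; apply: in_imfset.
have mC y : y \in s @` C -> exists2 x, x \in C & y = s x by move=> /imfsetP [x xC ->]; exists x.
have siq y : y \in s @` C -> base y -> si y = q y.
  move=> yY By; have /imfsetP [b bB eb] := hull_base spB0 hpB0 hZ' yY By.
  by rewrite eb (qp (hB0 _ bB)) -(sB b bB) c1.
split => //.
- by move=> x xC; split; [exact: msC | exact: c1].
- by move=> y /mC [x xC ->]; rewrite c1.
- by move=> x xC Bx; apply: sB; apply: hull_base sB0C hB0 hZ x xC Bx.
- move=> x z xC Bz; case: (boolP (z \in C)) => zC.
    by rewrite -(sB z (hull_base sB0C hB0 hZ zC Bz)) sE.
  have pzY : p z \notin s @` C.
    apply/negP => /(hull_base spB0 hpB0 hZ') /(_ (hp Bz)) /imfsetP [b bB eb].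
    have ezb : z = b by rewrite -(qp Bz) eb qp //; apply: hB0.
    by move: zC; rewrite ezb (fsubsetP sB0C _ bB).
  by rewrite (hull_base_noE sB0C hB0 hZ xC Bz zC) (hull_base_noE spB0 hpB0 hZ' (msC _ xC) (hp Bz) pzY).
- move=> y z yY Bz; case: (boolP (z \in s @` C)) => zY; first by rewrite -siq // siE.
  have qzC : q z \notin C.
    apply/negP => qzC; have qB : q z \in B0 by apply: hull_base sB0C hB0 hZ _ qzC (hq Bz).
    by move: zY; rewrite -(pq Bz) -(sB _ qB) (msC _ qzC).
  have [x xC ey] := mC y yY.
  by rewrite (hull_base_noE spB0 hpB0 hZ' yY Bz zY) ey c1 (hull_base_noE sB0C hB0 hZ xC (hq Bz) qzC).
- exact: hull_closedU sB0C hB0 hZ.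
- exact: hull_closedU spB0 hpB0 hZ'.
Qed.

Lemma bf_forth X f Y g x0 : bf_inv X f Y g -> exists X' f' Y' g',
  [/\ bf_inv X' f' Y' g', x0 \in X', X `<=` X', Y `<=` Y' &
     {in X, f' =1 f} /\ {in Y, g' =1 g}].
Proof.
move=> bf; have [B0 [hB0 hw]] := base_spans_fset (x0 |` X).
have [C [sWC hC dC _]] := closure_ex ((x0 |` X) `|` B0).
have sB0C : B0 `<=` C by apply: fsubset_trans sWC; exact: fsubsetUr.
have sXC : x0 |` X `<=` C by apply: fsubset_trans sWC; exact: fsubsetUl.
have hZ : (d2 C <= Posz (2 * m * #|` B0|)%N)%R.
  by rewrite dC dim_absorb_set // dim_cindep //; exact: base_cindep.
have cA : closedM m E (X `|` B0) by apply/closedM_closed; rewrite fs_fset; exact: (bf_closedX bf hB0).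
have cA' : closedM m E (Y `|` p @` B0).
  by apply/closedM_closed; rewrite fs_fset; exact: (bf_closedY bf (within_imp hB0)).
case: hM => _ [_ [hhom _]].
have [s hs sF] := hhom _ _ _ cA cA' (glue_partial_iso bf hB0).
have [si [c1 c2 _]] := aut_inv hs.
have sX : {in X, s =1 f} by move=> x xX; rewrite sF /glue ?xX // inE xX.
have sB : {in B0, s =1 p}.
  move=> b bB; rewrite sF ?inE ?bB ?orbT // /glue; case: ifP => // bX.
  by rewrite (bf_fp bf) //; apply: hB0.
exists C, s, (s @` C), si; split.
- exact: (aut_hull_bf hB0 sB0C hZ hs c1 c2 sB).
- by apply: (fsubsetP sXC); exact: fset1U1.
- by apply: fsubset_trans sXC; exact: fsubsetU1.
- apply/fsubsetP => y yY; have [gX fgy] := bf_gK bf yY.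
  by rewrite -fgy -sX //; apply: in_imfset; apply: (fsubsetP sXC); rewrite inE gX orbT.
- split => // y yY; have [gX fgy] := bf_gK bf yY.
  by rewrite -{1}fgy -sX // c1.
Qed.

End Permutation.

Lemma bf_inv_swap p q X f Y g : bf_inv p q X f Y g -> bf_inv q p Y g X f.
Proof.
case=> h1 h2 h3 h4 h5 h6 h7 h8 h9; split => //.
move=> y z yY zY; have [gy fgy] := h2 y yY; have [gz fgz] := h2 z zY.
by rewrite -h5 // fgy fgz.
Qed.

Section BackAndForth.
Variables p q : V -> V.
Hypotheses (hp : forall x, base x -> base (p x)) (hq : forall x, base x -> base (q x))
  (qp : forall x, base x -> q (p x) = x) (pq : forall x, base x -> p (q x) = x).

Record bf_state := BFState { dom : {fset V}; fwd : V -> V; cod : {fset V}; bwd : V -> V }.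

Definition bf_ok st := bf_inv p q (dom st) (fwd st) (cod st) (bwd st).

Definition bf_le st st' :=
  [/\ dom st `<=` dom st', cod st `<=` cod st',
      {in dom st, fwd st' =1 fwd st} & {in cod st, bwd st' =1 bwd st}].

Lemma bf_le_refl st : bf_le st st.
Proof. by split. Qed.

Lemma bf_le_trans st1 st2 st3 : bf_le st1 st2 -> bf_le st2 st3 -> bf_le st1 st3.
Proof.
move=> [a1 b1 c1 d1] [a2 b2 c2 d2]; split.
- exact: fsubset_trans a2.
- exact: fsubset_trans b2.
- by move=> x xX; rewrite c2 ?c1 //; apply: (fsubsetP a1).
- by move=> x xX; rewrite d2 ?d1 //; apply: (fsubsetP b1).
Qed.

(* One step forth (to put [x] in the domain) and one step back (to put it in the range). *)
Lemma bf_step_ex st (o : option V) : exists st', bf_ok st ->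
  [/\ bf_ok st', (forall x, o = Some x -> x \in dom st' /\ x \in cod st') & bf_le st st'].
Proof.
case: o => [x|]; last by exists st => h; split => //; exact: bf_le_refl.
case: (classic (bf_ok st)) => hst; last by exists st.
have [X1 [f1 [Y1 [g1 [i1 x1 sX1 sY1 [e1 e1']]]]]] := bf_forth hp hq qp pq x hst.
have [Y2 [g2 [X2 [f2 [i2 x2 sY2 sX2 [e2 e2']]]]]] :=
  bf_forth hq hp pq qp x (bf_inv_swap i1).
exists (BFState X2 f2 Y2 g2) => _; split => /=.
- exact: bf_inv_swap i2.
- by move=> _ [<-]; split => //; apply: (fsubsetP sX2).
- split => /=.
  + exact: fsubset_trans sX1 sX2.
  + exact: fsubset_trans sY1 sY2.
  + by move=> y yX; rewrite e2' ?e1 //; apply: (fsubsetP sX1).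
  + by move=> y yY; rewrite e2 ?e1' //; apply: (fsubsetP sY1).
Qed.

Definition bf_step st o : bf_state :=
  proj1_sig (constructive_indefinite_description _ (bf_step_ex st o)).

Lemma bf_stepP st o : bf_ok st ->
  [/\ bf_ok (bf_step st o),
      (forall x, o = Some x -> x \in dom (bf_step st o) /\ x \in cod (bf_step st o)) &
      bf_le st (bf_step st o)].
Proof. exact: proj2_sig (constructive_indefinite_description _ (bf_step_ex st o)). Qed.

Fixpoint bf_chain n : bf_state :=
  if n is n'.+1 then bf_step (bf_chain n') (choice.unpickle n') else BFState fset0 id fset0 id.

Lemma bf_chain_ok n : bf_ok (bf_chain n).
Proof.
elim: n => [|n IH] /=; last by case: (bf_stepP (choice.unpickle n) IH).
by split => //= B1 hB1; rewrite fset0U; case: (base_cindep hB1).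
Qed.

Lemma bf_chain_le n k : (n <= k)%N -> bf_le (bf_chain n) (bf_chain k).
Proof.
elim: k => [|k IH]; first by rewrite leqn0 => /eqP ->; exact: bf_le_refl.
rewrite leq_eqVlt => /orP [/eqP ->|]; first exact: bf_le_refl.
rewrite ltnS => /IH h; apply: bf_le_trans h _.
by case: (bf_stepP (choice.unpickle k) (bf_chain_ok k)).
Qed.

Lemma mem_bf_chain x k : ((choice.pickle x).+1 <= k)%N ->
  x \in dom (bf_chain k) /\ x \in cod (bf_chain k).
Proof.
move=> hk; have [sX sY _ _] := bf_chain_le hk.
case: (bf_stepP (choice.unpickle (choice.pickle x)) (bf_chain_ok (choice.pickle x))) => _ h _.
have [hX hY] := h x (choice.pickleK x).
by split; [apply: (fsubsetP sX) | apply: (fsubsetP sY)].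
Qed.

Lemma perm_base_extends : exists2 s, automorphism E s & (forall x, base x -> s x = p x).
Proof.
pose s x := fwd (bf_chain (choice.pickle x).+1) x.
pose t y := bwd (bf_chain (choice.pickle y).+1) y.
have sE x k : ((choice.pickle x).+1 <= k)%N -> fwd (bf_chain k) x = s x.
  by move=> hk; have [_ _ h _] := bf_chain_le hk; apply: h; exact: (mem_bf_chain (leqnn _)).1.
have tE y k : ((choice.pickle y).+1 <= k)%N -> bwd (bf_chain k) y = t y.
  by move=> hk; have [_ _ _ h] := bf_chain_le hk; apply: h; exact: (mem_bf_chain (leqnn _)).2.
exists s; first split.
- exists t => x.
    set M := maxn (choice.pickle x).+1 (choice.pickle (s x)).+1.
    rewrite -(tE (s x) M) ?leq_maxr // -(sE x M) ?leq_maxl //.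
    exact: (bf_fK (bf_chain_ok M) (mem_bf_chain (leq_maxl _ _)).1).2.
  set M := maxn (choice.pickle x).+1 (choice.pickle (t x)).+1.
  rewrite -(sE (t x) M) ?leq_maxr // -(tE x M) ?leq_maxl //.
  exact: (bf_gK (bf_chain_ok M) (mem_bf_chain (leq_maxl _ _)).2).2.
- move=> x y; set M := maxn (choice.pickle x).+1 (choice.pickle y).+1.
  rewrite -(sE x M) ?leq_maxl // -(sE y M) ?leq_maxr // (bf_fE (bf_chain_ok M)) //.
  + exact: (mem_bf_chain (leq_maxl _ _)).1.
  + exact: (mem_bf_chain (leq_maxr _ _)).1.
- by move=> x Bx; rewrite /s (bf_fp (bf_chain_ok _)) //; exact: (mem_bf_chain (leqnn _)).1.
Qed.

End BackAndForth.

End Base.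

Lemma absorb_step_ex (B0 : {fset V}) (o : option V) : exists B1, cindep B0 ->
  [/\ B0 `<=` B1, cindep B1 & forall v, o = Some v -> dim (v |` B1) = dim B1].
Proof.
case: o => [v|]; last by exists B0.
case: (classic (cindep B0)) => hB0; last by exists B0.
by have [B1 [? ? ?]] := absorb_ex v hB0; exists B1 => _; split => // _ [<-].
Qed.

Definition absorb_step B0 o := proj1_sig (constructive_indefinite_description _ (absorb_step_ex B0 o)).

Lemma absorb_stepP B0 o : cindep B0 ->
  [/\ B0 `<=` absorb_step B0 o, cindep (absorb_step B0 o) &
      forall v, o = Some v -> dim (v |` absorb_step B0 o) = dim (absorb_step B0 o)].
Proof. exact: proj2_sig (constructive_indefinite_description _ (absorb_step_ex B0 o)). Qed.

Fixpoint base_chain n : {fset V} :=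
  if n is n'.+1 then absorb_step (base_chain n') (choice.unpickle n') else fset0.

Definition in_base x := exists n, x \in base_chain n.

Lemma cindep0 : cindep fset0.
Proof.
split; last by rewrite /arcs big_seq_fset0.
by move=> X _; rewrite /delta2 /arcs big_seq_fset0 cardfs0 muln0 subr0; exact: delta2_ge0.
Qed.

Lemma base_chain_cindep n : cindep (base_chain n).
Proof. by elim: n => [|n IH] /=; [exact: cindep0 | case: (absorb_stepP (choice.unpickle n) IH)]. Qed.

Lemma base_chain_mono n k : (n <= k)%N -> base_chain n `<=` base_chain k.
Proof.
elim: k => [|k IH]; first by rewrite leqn0 => /eqP ->.
rewrite leq_eqVlt => /orP [/eqP ->|]; first exact: fsubset_refl.
rewrite ltnS => /IH h; apply: fsubset_trans h _ => /=.
by case: (absorb_stepP (choice.unpickle k) (base_chain_cindep k)).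
Qed.

Lemma in_base_cindep B0 : within in_base B0 -> cindep B0.
Proof.
move=> hB0; suff [n hn] : exists n, B0 `<=` base_chain n.
  exact: cindepS (base_chain_cindep n) hn.
elim/fset1U_rect: B0 hB0 => [|x X _ IH] hB0; first by exists 0%N; exact: fsub0set.
have [n hn] := IH (fun z zX => hB0 z (fset1Ur x zX)).
have [k hk] := hB0 x (fset1U1 x X).
exists (maxn n k); apply/fsubsetP => y /fset1UP [->|yX].
  exact: (fsubsetP (base_chain_mono (leq_maxr n k))).
by apply: (fsubsetP (base_chain_mono (leq_maxl n k))); apply: (fsubsetP hn).
Qed.

Lemma dim_absorb_base_chain z :
  dim (z |` base_chain (choice.pickle z).+1) = dim (base_chain (choice.pickle z).+1).
Proof.
have [_ _ h] := absorb_stepP (choice.unpickle (choice.pickle z)) (base_chain_cindep (choice.pickle z)).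
by apply: h; rewrite choice.pickleK.
Qed.

Lemma in_base_spans z : exists A, within in_base A /\ dim (z |` A) = dim A.
Proof.
exists (base_chain (choice.pickle z).+1); split; last exact: dim_absorb_base_chain.
by move=> y yB; exists (choice.pickle z).+1.
Qed.

Lemma dim_isE (s : seq V) : exists k, dim_is m E s k /\ (k * 2 = dim (fs s))%R.
Proof.
have [C [sC hC dC minC]] := closure_ex (fs s).
exists (delta m E C); split; last by rewrite delta_delta2 ?fs_fset ?dC //; [exact: Esym | exact: Eirr].
exists C => //; split; [|split].
- by apply/sub_fs; rewrite fs_fset.
- by apply/closedM_closed; rewrite fs_fset.
- move=> C' sC' hC'; apply/sub_fs; rewrite fs_fset; apply: minC; first exact/sub_fs.
  exact/closedM_closed.
Qed.

Lemma in_base_gcl v : in_gcl m E in_base v.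
Proof.
set n := (choice.pickle v).+1; exists (base_chain n); split; first by move=> x xB; exists n.
have [k [hk ek]] := dim_isE (base_chain n).
have [k' [hk' ek']] := dim_isE (v :: base_chain n).
exists k, k'; split => //.
have e1 : fs (v :: base_chain n) = v |` base_chain n by apply/fsetP => y; rewrite in_fs !inE.
move: ek ek'; rewrite e1 dim_absorb_base_chain fs_fset; set a := dim (base_chain n); lia.
Qed.

Lemma in_base_closedM B0 : (forall x, x \in B0 -> in_base x) -> closedM m E B0.
Proof.
move=> hB0; apply/closedM_closed; case: (in_base_cindep (B0 := fs B0) _) => // z.
by rewrite in_fs; apply: hB0.
Qed.

Lemma in_base_perm_extends p : (forall x, in_base x -> in_base (p x)) ->
  (forall x y, in_base x -> in_base y -> p x = p y -> x = y) ->
  (forall y, in_base y -> exists2 x, in_base x & p x = y) ->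
  exists2 s, automorphism E s & (forall x, in_base x -> s x = p x).
Proof.
move=> hp hinj hsurj.
have qex y : exists x, in_base y -> in_base x /\ p x = y.
  case: (classic (in_base y)) => hy; last by exists y.
  by have [x hx px] := hsurj y hy; exists x.
pose q y := proj1_sig (constructive_indefinite_description _ (qex y)).
have qP y : in_base y -> in_base (q y) /\ p (q y) = y.
  exact: proj2_sig (constructive_indefinite_description _ (qex y)).
apply: (perm_base_extends in_base_cindep in_base_spans (q := q)) => // x hx.
- exact: (qP x hx).1.
- by have [h1 h2] := qP (p x) (hp x hx); apply: hinj.
- exact: (qP x hx).2.
Qed.

End Generic.

Local Close Scope fset_scope.

Theorem lemma8 (m : nat) (hm : (2 <= m)%N) (V : countType) (E : rel V)
    (hM : is_generic m E) :
  exists B : V -> Prop,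
    (forall v, in_gcl m E B v) /\
    (forall B0 : seq V, (forall x, x \in B0 -> B x) -> closedM m E B0) /\
    (forall p : V -> V,
        (forall x, B x -> B (p x)) ->
        (forall x y, B x -> B y -> p x = p y -> x = y) ->
        (forall y, B y -> exists2 x, B x & p x = y) ->
        exists2 s, automorphism E s & (forall x, B x -> s x = p x)).
Proof.
exists (in_base hm hM); split; [|split].
- exact: in_base_gcl.
- exact: in_base_closedM.
- exact: in_base_perm_extends.
Qed.
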